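(* Let $p,q\ge1$, $u\in\mathfrak{S}_p$, $v\in\mathfrak{S}_q$. For $w\in\mathfrak{S}_{p+q}$ let $A^w_{u,v}$ be the set of $\zeta\in\mathfrak{S}^{(p,q)}$ such that (i) $(u\times v)\cdot\zeta^{-1}\le w$, and (ii) whenever $u'\in\mathfrak{S}_p$, $v'\in\mathfrak{S}_q$ satisfy $u\le u'$, $v\le v'$ and $(u'\times v')\cdot\zeta^{-1}\le w$, then $u'=u$ and $v'=v$. Let $\alpha^w_{u,v}=\#A^w_{u,v}$. Then $$\mathcal{M}_u\cdot\mathcal{M}_v=\sum_{w\in\mathfrak{S}_{p+q}}\alpha^w_{u,v}\,\mathcal{M}_w .$$
   Context: Permutations in one-line notation, product is composition. For $u\in\mathfrak{S}_p,v\in\mathfrak{S}_q$, $u\times v\in\mathfrak{S}_{p+q}$ has $(u\times v)(i)=u_i$ ($i\le p$), $(u\times v)(p+j)=p+v_j$. $\mathfrak{S}^{(p,q)}=\{\zeta\in\mathfrak{S}_{p+q}:\zeta_1<\cdots<\zeta_p,\zeta_{p+1}<\cdots<\zeta_{p+q}\}$. $\mathrm{st}(a_1,\ldots,a_m)\in\mathfrak{S}_m$ is the permutation with the same relative order as the distinct integers $a_i$. $\mathfrak{S}Sym$ is the graded Hopf algebra over $\mathbb{Q}$ with basis $\{\mathcal{F}_u:u\in\mathfrak{S}_n,n\ge0\}$, product $\mathcal{F}_u\cdot\mathcal{F}_v=\sum_{\zeta\in\mathfrak{S}^{(p,q)}}\mathcal{F}_{(u\times v)\cdot\zeta^{-1}}$,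 coproduct $\Delta(\mathcal{F}_u)=\sum_{p=0}^n\mathcal{F}_{\mathrm{st}(u_1..u_p)}\otimes\mathcal{F}_{\mathrm{st}(u_{p+1}..u_n)}$. Weak order: $u\le v$ iff $\mathrm{Inv}(u)\subseteq\mathrm{Inv}(v)$, $\mathrm{Inv}(u)=\{(i,j):i<j,u_i>u_j\}$, Möbius function $\mu$. Monomial basis: $\mathcal{M}_u=\sum_{v\ge u}\mu(u,v)\mathcal{F}_v$, equivalently $\mathcal{F}_u=\sum_{v\ge u}\mathcal{M}_v$. *)

From mathcomp Require Import all_boot all_order all_fingroup all_algebra.
Set Implicit Arguments. Unset Strict Implicit. Unset Printing Implicit Defensive.
Import GRing.Theory.
Local Open Scope ring_scope.

(* Permutations of {0,..,n-1}; one-line notation u_i = u i (0-indexed). *)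

(* Composition product: (pcomp u v) i = u (v i).  MathComp's ( * )%g on
   perms is left-to-right, hence the swap. *)
Definition pcomp n (u v : 'S_n) : 'S_n := (v * u)%g.

Lemma pcompE n (u v : 'S_n) i : pcomp u v i = u (v i).
Proof. by rewrite /pcomp permM. Qed.

Definition cross_fun p q (u : 'S_p) (v : 'S_q) (i : 'I_(p + q)) : 'I_(p + q) :=
  match split i with
  | inl j => lshift q (u j)
  | inr k => rshift p (v k)
  end.

Lemma cross_fun_inj p q (u : 'S_p) (v : 'S_q) : injective (cross_fun u v).
Proof.
move=> i i'; rewrite /cross_fun -[i]splitK -[i']splitK !unsplitK.
case: (split i) => [j|k]; case: (split i') => [j'|k'] /= /(congr1 val) /= E.
- by congr (unsplit (inl _)); apply: (@perm_inj _ u); apply: val_inj.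
- by have := ltn_ord (u j); rewrite E -{2}(addn0 p) ltn_add2l.
- by have := ltn_ord (u j'); rewrite -E -{2}(addn0 p) ltn_add2l.
- congr (unsplit (inr _)); apply: (@perm_inj _ v); apply: val_inj.
  by move/eqP: E; rewrite eqn_add2l => /eqP.
Qed.

Definition cross p q (u : 'S_p) (v : 'S_q) : 'S_(p + q) := perm (@cross_fun_inj p q u v).

Definition shuffle p q (z : 'S_(p + q)) : bool :=
  [forall i : 'I_p, forall j : 'I_p, (i < j)%N ==> (z (lshift q i) < z (lshift q j))%N]
  && [forall i : 'I_q, forall j : 'I_q, (i < j)%N ==> (z (rshift p i) < z (rshift p j))%N].

Definition Inv n (u : 'S_n) : {set 'I_n * 'I_n} :=
  [set ij : 'I_n * 'I_n | (ij.1 < ij.2)%N && (u ij.2 < u ij.1)%N].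

Definition leW n (u v : 'S_n) : bool := Inv u \subset Inv v.

(* The fuel #|Inv v| suffices since w < v implies #|Inv w| < #|Inv v|. *)
Fixpoint mu_rec n (k : nat) (u v : 'S_n) : rat :=
  if u == v then 1
  else if leW u v then
    match k with
    | 0 => 0
    | k'.+1 => - \sum_(w : 'S_n | leW u w && leW w v && (w != v)) mu_rec k' u w
    end
  else 0.

Definition mu n (u v : 'S_n) : rat := mu_rec #|Inv v| u v.

(* Homogeneous component of degree n of SSym over Q: coefficient vectors
   on the fundamental basis F_w, w in S_n. *)
Definition SSymn n := {ffun 'S_n -> rat}.

Definition sc n (c : rat) (a : SSymn n) : SSymn n := [ffun w => c * a w].

Definition F n (u : 'S_n) : SSymn n := [ffun w => (w == u)%:R].

Definition mulF p q (a : SSymn p) (b : SSymn q) : SSymn (p + q) :=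
  \sum_(u : 'S_p) \sum_(v : 'S_q)
     sc (a u * b v) (\sum_(z : 'S_(p + q) | shuffle z) F (pcomp (cross u v) z^-1%g)).

Definition M n (u : 'S_n) : SSymn n := \sum_(v : 'S_n | leW u v) sc (mu u v) (F v).

Definition Aset p q (u : 'S_p) (v : 'S_q) (w : 'S_(p + q)) : {set 'S_(p + q)} :=
  [set z | shuffle z
     && leW (pcomp (cross u v) z^-1%g) w
     && [forall u' : 'S_p, forall v' : 'S_q,
           (leW u u' && leW v v' && leW (pcomp (cross u' v') z^-1%g) w)
             ==> ((u' == u) && (v' == v))]].

Definition alpha p q (u : 'S_p) (v : 'S_q) (w : 'S_(p + q)) : nat := #|Aset u v w|.

From Pilot Require Import Defs.
From mathcomp Require Import all_boot all_order all_fingroup all_algebra.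
From mathcomp Require Import ring.
Set Implicit Arguments. Unset Strict Implicit. Unset Printing Implicit Defensive.
Import GRing.Theory.
Local Open Scope ring_scope.

(* The zeta transform [zeta a w = \sum_(x <= w) a x] of the weak order is
   injective and sends [M_u] to the indicator of [u].  For a shuffle [z], the
   condition [(u' x v') z^-1 <= w] splits into [u' <= st((w z)_1 .. (w z)_p)],
   [v' <= st((w z)_(p+1) .. (w z)_(p+q))] and a condition on [w] and [z] alone.
   Summing against [M_u] and [M_v], the zeta transform of [M_u M_v] at [w] thus
   counts the shuffles satisfying that condition whose two standardizations are
   exactly [u] and [v]: these are the elements of [A^w_{u,v}]. *)

Lemma ltn_ord_mono n (f : 'I_n -> nat) :
  {homo f : i j / (i < j)%N} -> {mono f : i j / (i < j)%N}.
Proof.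
move=> f_homo i j; case: (ltngtP i j) => [ij|ji|/val_inj->]; first exact: f_homo.
- by apply/negbTE; rewrite -leqNgt ltnW // f_homo.
- by rewrite !ltnn.
Qed.

Lemma leWP n (x y : 'S_n) :
  reflect (forall i j : 'I_n, (i < j)%N -> (x j < x i)%N -> (y j < y i)%N) (leW x y).
Proof.
apply: (iffP subsetP) => [xy i j ij xji | xy [i j]].
- by have := xy (i, j); rewrite !inE /= ij xji => /(_ isT)/andP[].
- by rewrite !inE /= => /andP[ij xji]; rewrite ij xy.
Qed.

Lemma leW_refl n (x : 'S_n) : leW x x.
Proof. exact: subxx. Qed.

Lemma leW_trans n (x y z : 'S_n) : leW x y -> leW y z -> leW x z.
Proof. exact: subset_trans. Qed.

Lemma card_ord_ltn n m : (m <= n)%N -> #|[set k : 'I_n | (k < m)%N]| = m.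
Proof.
move=> mn; have widen_inj : injective (widen_ord mn).
  by move=> a b /(congr1 val) /= /val_inj.
rewrite -[RHS]card_ord -(card_imset _ widen_inj).
apply: eq_card => k; rewrite inE; apply/idP/imsetP => [km|[j _ ->]].
- by exists (Ordinal km); last apply: val_inj.
- by rewrite /= ltn_ord.
Qed.

Lemma card_perm_ltn n (u : 'S_n) i : #|[set j | (u j < u i)%N]| = u i.
Proof.
rewrite -[RHS](@card_ord_ltn n) 1?ltnW // -[RHS](card_preimset _ (@perm_inj _ u)).
by apply: eq_card => j; rewrite !inE.
Qed.

(* [u i] is the number of [j] with [u j < u i], which [Inv u] determines. *)
Lemma Inv_inj n : injective (@Inv n).
Proof.
move=> u v Euv; apply/permP => i; apply: val_inj => /=.
have Inv_ltn (a b : 'I_n) : (a < b)%N -> (u b < u a)%N = (v b < v a)%N.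
  move=> ab; have := congr1 (fun S : {set 'I_n * 'I_n} => (a, b) \in S) Euv.
  by rewrite /= !inE /= ab.
have perm_ltn_sym (w : 'S_n) (a b : 'I_n) : a != b -> (w a < w b)%N = ~~ (w b < w a)%N.
  move=> ab; rewrite -leqNgt ltn_neqAle andb_idl // => _.
  by apply: contraNneq ab => /val_inj/perm_inj->.
rewrite -card_perm_ltn -(card_perm_ltn v); apply: eq_card => j; rewrite !inE.
case: (ltngtP j i) => [ji|ij|/val_inj->]; last by rewrite !ltnn.
- by rewrite !(perm_ltn_sym _ j i) ?Inv_ltn // neq_ltn ji.
- exact: Inv_ltn.
Qed.

Lemma leW_anti n (x y : 'S_n) : leW x y -> leW y x -> x = y.
Proof. by move=> xy yx; apply: Inv_inj; apply/eqP; rewrite eqEsubset; apply/andP. Qed.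

Lemma card_Inv_ltn n (x y : 'S_n) : leW x y -> x != y -> (#|Inv x| < #|Inv y|)%N.
Proof.
move=> xy nxy; apply: proper_card; rewrite properEneq; apply/andP; split=> //.
exact: contra_neq (@Inv_inj n x y) nxy.
Qed.

Lemma mu_rec_fuel n k1 k2 (u x : 'S_n) :
  (#|Inv x| <= k1)%N -> (#|Inv x| <= k2)%N -> mu_rec k1 u x = mu_rec k2 u x.
Proof.
elim: k1 k2 x => [|k1 IH] [|k2] x h1 h2 //=; case: eqVneq => // ux; case: ifP => // le.
- by have := card_Inv_ltn le ux; rewrite ltnNge (leq_trans h1).
- by have := card_Inv_ltn le ux; rewrite ltnNge (leq_trans h2).
congr (- _); apply: eq_bigr => y /andP[/andP[_ yx] nyx].
by apply: IH; rewrite -ltnS (leq_trans (card_Inv_ltn yx nyx)).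
Qed.

Lemma mu_refl n (u : 'S_n) : mu u u = 1.
Proof. by rewrite /mu; case: #|Inv u| => [|k] /=; rewrite eqxx. Qed.

Lemma sum_mu_interval n (u y : 'S_n) :
  \sum_(x | leW u x && leW x y) mu u x = (u == y)%:R.
Proof.
have [uy|] := boolP (leW u y); last first.
  move=> uy; rewrite big1 => [|x /andP[ux xy]]; last by rewrite (leW_trans ux xy) in uy.
  by case: eqVneq uy => // ->; rewrite leW_refl.
case: eqVneq => [<-|neq].
  rewrite (big_pred1 u) ?mu_refl // => x /=.
  by apply/andP/eqP => [[ux xu]|->]; [exact: leW_anti | rewrite leW_refl].
rewrite (bigD1 y) /=; last by rewrite uy leW_refl.
rewrite /mu; case E: #|Inv y| => [|k]; first by have := card_Inv_ltn uy neq; rewrite E.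
rewrite /= (negbTE neq) uy (eq_bigr (mu u)) ?addNr // => x /andP[/andP[_ xy] nxy].
by apply: mu_rec_fuel; rewrite // -ltnS -E card_Inv_ltn.
Qed.

Definition zeta n (a : SSymn n) (w : 'S_n) : rat := \sum_(x | leW x w) a x.

Lemma zetaE n (a : SSymn n) w : zeta a w = \sum_x a x * (leW x w)%:R.
Proof.
by rewrite /zeta big_mkcond; apply: eq_bigr => x _; case: (leW x w); rewrite ?mulr1 ?mulr0.
Qed.

(* [zeta a w] is [a w] plus values of [a] at elements with fewer inversions. *)
Lemma zeta_inj n (a b : SSymn n) : zeta a =1 zeta b -> a = b.
Proof.
move=> eq_zeta; apply/ffunP => w.
suff zeta_ind k : forall w, (#|Inv w| < k)%N -> a w = b w by exact: zeta_ind.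
elim: k => // k IH {}w lt_wk; have := eq_zeta w.
rewrite /zeta (bigD1 w) ?leW_refl //= [RHS](bigD1 w) ?leW_refl //=.
rewrite (eq_bigr b) => [/addIr //|x].
by case/andP=> xw nxw; apply: IH; rewrite (leq_trans (card_Inv_ltn xw nxw)).
Qed.

Lemma scE n c (a : SSymn n) x : sc c a x = c * a x.
Proof. by rewrite ffunE. Qed.

Lemma FE n (u x : 'S_n) : F u x = (x == u)%:R.
Proof. by rewrite ffunE. Qed.

Lemma ME n (u x : 'S_n) : M u x = if leW u x then mu u x else 0.
Proof.
rewrite /M sum_ffunE; under eq_bigr do rewrite scE FE.
case: ifPn => ux; last first.
  apply: big1 => y uy; case: eqVneq => [xy|]; last by rewrite mulr0.
  by rewrite xy uy in ux.
rewrite (bigD1 x) //= eqxx mulr1 big1 ?addr0 // => y /andP[_ nyx].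
by rewrite eq_sym (negbTE nyx) mulr0.
Qed.

Lemma zeta_sum n (I : finType) (P : pred I) (f : I -> SSymn n) w :
  zeta (\sum_(i | P i) f i) w = \sum_(i | P i) zeta (f i) w.
Proof. by rewrite /zeta; under eq_bigr do rewrite sum_ffunE; apply: exchange_big. Qed.

Lemma zeta_sc n c (a : SSymn n) w : zeta (sc c a) w = c * zeta a w.
Proof. by rewrite /zeta mulr_sumr; apply: eq_bigr => x _; rewrite scE. Qed.

Lemma zeta_F n (y w : 'S_n) : zeta (F y) w = (leW y w)%:R.
Proof.
rewrite zetaE (bigD1 y) //= FE eqxx mul1r big1 ?addr0 // => x ny.
by rewrite FE (negbTE ny) mul0r.
Qed.

Lemma zeta_M n (u y : 'S_n) : zeta (M u) y = (u == y)%:R.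
Proof.
rewrite /zeta; under eq_bigr do rewrite ME.
by rewrite -big_mkcondr -sum_mu_interval; apply: eq_bigl => x; rewrite andbC.
Qed.

Lemma zeta_sum_scM n (c : 'S_n -> rat) w : zeta (\sum_w' sc (c w') (M w')) w = c w.
Proof.
rewrite zeta_sum; under eq_bigr do rewrite zeta_sc zeta_M.
by rewrite (bigD1 w) //= eqxx mulr1 big1 ?addr0 // => w' /negbTE->; rewrite mulr0.
Qed.

Definition st_rank n (f : 'I_n -> nat) (i : 'I_n) : nat := #|[set j | (f j < f i)%N]|.

Lemma st_rank_lt n (f : 'I_n -> nat) i : (st_rank f i < n)%N.
Proof.
have : [set j | (f j < f i)%N] \proper [set: 'I_n].
  by rewrite properT; apply/eqP => /setP/(_ i); rewrite !inE ltnn.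
by move/proper_card; rewrite cardsT card_ord.
Qed.

Lemma st_rank_homo n (f : 'I_n -> nat) i j :
  (f i < f j)%N -> (st_rank f i < st_rank f j)%N.
Proof.
move=> fij; apply: proper_card; apply/properP; split.
  by apply/subsetP => k; rewrite !inE => /ltn_trans; apply.
by exists i; rewrite !inE ?fij // ltnn.
Qed.

Lemma st_rank_mono n (f : 'I_n -> nat) : injective f ->
  forall i j, (st_rank f i < st_rank f j)%N = (f i < f j)%N.
Proof.
move=> f_inj i j; case: (ltngtP (f i) (f j)) => [fij|fji|/f_inj->].
- exact: st_rank_homo.
- by apply/negbTE; rewrite -leqNgt ltnW // st_rank_homo.
- exact: ltnn.
Qed.

Lemma st_rank_inj n (f : 'I_n -> nat) (f_inj : injective f) :
  injective (fun i => Ordinal (st_rank_lt f i)).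
Proof.
move=> i j /(congr1 val) /= eq_ij.
by case: (ltngtP (f i) (f j)) => [|| /f_inj //] /st_rank_homo; rewrite eq_ij ltnn.
Qed.

Definition st n (f : 'I_n -> nat) (f_inj : injective f) : 'S_n := perm (st_rank_inj f_inj).

Lemma st_ltE n (f : 'I_n -> nat) (f_inj : injective f) i j :
  (st f_inj i < st f_inj j)%N = (f i < f j)%N.
Proof. by rewrite !permE /= st_rank_mono. Qed.

Section Shuffle.
Variables p q : nat.

Lemma cross_lshift (u' : 'S_p) (v' : 'S_q) i : cross u' v' (lshift q i) = lshift q (u' i).
Proof. by rewrite permE /cross_fun (unsplitK (inl i : 'I_p + 'I_q)). Qed.

Lemma cross_rshift (u' : 'S_p) (v' : 'S_q) i : cross u' v' (rshift p i) = rshift p (v' i).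
Proof. by rewrite permE /cross_fun (unsplitK (inr i : 'I_p + 'I_q)). Qed.

Lemma shuffle_lshift_ltE (z : 'S_(p + q)) : shuffle z ->
  forall i j, (z (lshift q i) < z (lshift q j))%N = (i < j)%N.
Proof.
case/andP => /forallP homo _; apply: (ltn_ord_mono (f := fun i => val (z (lshift q i)))).
by move=> i j; apply/implyP/(forallP (homo i)).
Qed.

Lemma shuffle_rshift_ltE (z : 'S_(p + q)) : shuffle z ->
  forall i j, (z (rshift p i) < z (rshift p j))%N = (i < j)%N.
Proof.
case/andP => _ /forallP homo; apply: (ltn_ord_mono (f := fun i => val (z (rshift p i)))).
by move=> i j; apply/implyP/(forallP (homo i)).
Qed.

Lemma lshift_val_inj (w z : 'S_(p + q)) : injective (fun i => val (w (z (lshift q i)))).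
Proof. by move=> i j /val_inj/perm_inj/perm_inj/lshift_inj. Qed.

Lemma rshift_val_inj (w z : 'S_(p + q)) : injective (fun i => val (w (z (rshift p i)))).
Proof. by move=> i j /val_inj/perm_inj/perm_inj/rshift_inj. Qed.

Definition st_lshift (w z : 'S_(p + q)) : 'S_p := st (@lshift_val_inj w z).
Definition st_rshift (w z : 'S_(p + q)) : 'S_q := st (@rshift_val_inj w z).

(* For a shuffle [z], the pairs of positions [(z a, z b)] with [a] in the second
   block and [b] in the first are inversions of every [(u' x v') z^-1]. *)
Definition forced_inv_in (w z : 'S_(p + q)) : bool :=
  [forall a : 'I_q, forall b : 'I_p, (z (rshift p a) < z (lshift q b))%N ==>
      (w (z (lshift q b)) < w (z (rshift p a)))%N].

Lemma leW_cross_shuffle (u' : 'S_p) (v' : 'S_q) (w z : 'S_(p + q)) : shuffle z ->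
  leW (Defs.pcomp (cross u' v') z^-1%g) w =
  [&& leW u' (st_lshift w z), leW v' (st_rshift w z) & forced_inv_in w z].
Proof.
move=> sh; have leW_shuffleP : reflect (forall a b, (z a < z b)%N ->
    (cross u' v' b < cross u' v' a)%N -> (w (z b) < w (z a))%N)
    (leW (Defs.pcomp (cross u' v') z^-1%g) w).
  apply: (iffP (leWP _ _)) => [le_w a b | le_w i j ij].
    by have := le_w (z a) (z b); rewrite !pcompE !permK; apply.
  by have := le_w (z^-1%g i) (z^-1%g j); rewrite !permKV !pcompE; apply.
apply/leW_shuffleP/and3P => [le_w | [/leWP le_l /leWP le_r /forallP forced] a b].
- split.
  + apply/leWP => i j ij uji; rewrite /st_lshift !st_ltE; apply: le_w.
      by rewrite shuffle_lshift_ltE.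
    by rewrite !cross_lshift.
  + apply/leWP => i j ij vji; rewrite /st_rshift !st_ltE; apply: le_w.
      by rewrite shuffle_rshift_ltE.
    by rewrite !cross_rshift /= ltn_add2l.
  + apply/forallP => a; apply/forallP => b; apply/implyP => zab; apply: le_w => //.
    by rewrite cross_lshift cross_rshift /= (leq_trans (ltn_ord _)) ?leq_addr.
- rewrite -[a]splitK -[b]splitK.
  case: (split a) => [i|i]; case: (split b) => [j|j] /= zab;
    rewrite ?cross_lshift ?cross_rshift /= => cross_ba.
  + have := le_l i j; rewrite /st_lshift !st_ltE -(shuffle_lshift_ltE sh); exact.
  + by move: cross_ba; rewrite ltnNge (leq_trans (ltnW (ltn_ord _))) ?leq_addr.
  + exact: (implyP (forallP (forced i) j) zab).
  + move: cross_ba; rewrite ltn_add2l.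
    have := le_r i j; rewrite /st_rshift !st_ltE -(shuffle_rshift_ltE sh); exact.
Qed.

(* Condition (ii) asks [(u, v)] to be maximal in the product of two principal
   lower sets of the weak order, so it forces [(u, v)] to be their top. *)
Lemma in_Aset (u : 'S_p) (v : 'S_q) (w z : 'S_(p + q)) :
  (z \in Aset u v w) =
  shuffle z && [&& forced_inv_in w z, u == st_lshift w z & v == st_rshift w z].
Proof.
rewrite inE; case sh: (shuffle z) => //=; rewrite leW_cross_shuffle //.
apply/andP/and3P => [[/and3P[ul vr forced] /forallP maximal] | [forced /eqP-> /eqP->]].
- have /forallP/(_ (st_rshift w z))/implyP := maximal (st_lshift w z).
  rewrite ul vr leW_cross_shuffle // !leW_refl forced => /(_ isT)/andP[/eqP-> /eqP->].
  by rewrite !eqxx.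
- split; first by rewrite !leW_refl forced.
  apply/forallP => u'; apply/forallP => v'; apply/implyP.
  rewrite leW_cross_shuffle // => /andP[/andP[lu' lv'] /and3P[u'l v'r _]].
  by rewrite (leW_anti u'l lu') (leW_anti v'r lv') !eqxx.
Qed.

Lemma zeta_mulF (a : SSymn p) (b : SSymn q) (w : 'S_(p + q)) :
  zeta (mulF a b) w = \sum_(z | shuffle z)
    (forced_inv_in w z)%:R * (zeta a (st_lshift w z) * zeta b (st_rshift w z)).
Proof.
rewrite zeta_sum; under eq_bigr do rewrite zeta_sum.
under eq_bigr do under eq_bigr do rewrite zeta_sc zeta_sum.
under eq_bigr do under eq_bigr do
  under eq_bigr => z sh do rewrite zeta_F leW_cross_shuffle //.
under [RHS]eq_bigr do rewrite !zetaE big_distrlr mulr_sumr.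
rewrite [RHS]exchange_big; apply: eq_bigr => u' _.
under [RHS]eq_bigr do rewrite mulr_sumr.
rewrite [RHS]exchange_big; apply: eq_bigr => v' _.
by rewrite mulr_sumr; apply: eq_bigr => z _; rewrite -!mulnb !natrM /=; ring.
Qed.

End Shuffle.

Theorem mainTheorem7 (p q : nat) (hp : (0 < p)%N) (hq : (0 < q)%N)
    (u : 'S_p) (v : 'S_q) :
  mulF (M u) (M v) = \sum_(w : 'S_(p + q)) sc (alpha u v w)%:R (M w).
Proof.
apply: zeta_inj => w; rewrite zeta_mulF zeta_sum_scM /alpha -sum1_card natr_sum.
rewrite (eq_bigl _ _ (in_Aset u v w)) [RHS]big_mkcondr.
by apply: eq_bigr => z _; rewrite !zeta_M -!natrM !mulnb; case: ifP.
Qed.
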